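(* The graph $\mathcal{G}_3$ has finitely many connected components.
   Context: A square is a finite non-empty word of the form $XX$. A square reduction replaces a word $UXXV$ (with $X$ non-empty) by $UXV$. For $k\geqslant 1$, $\mathcal{G}_k$ is the undirected graph whose vertices are all finite non-empty words over a fixed $k$-letter alphabet, where two words $U,W$ are adjacent whenever one of them can be obtained from the other by a single square reduction. *)

From mathcomp Require Import all_boot.
Set Implicit Arguments. Unset Strict Implicit. Unset Printing Implicit Defensive.

Definition word (k : nat) := seq 'I_k.

Definition square_reduction (k : nat) (W U : word k) : Prop :=
  exists (u x v : word k), x <> [::] /\ W = u ++ x ++ x ++ v /\ U = u ++ x ++ v.

Definition Gk_adj (k : nat) (U W : word k) : Prop :=
  U <> [::] /\ W <> [::] /\ (square_reduction U W \/ square_reduction W U).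

Inductive Gk_connected (k : nat) : word k -> word k -> Prop :=
| Gk_refl (w : word k) : Gk_connected w w
| Gk_step (u v w : word k) : Gk_adj u v -> Gk_connected v w -> Gk_connected u w.

Definition Gk_finitely_many_components (k : nat) : Prop :=
  exists reps : seq (word k),
    (forall r, r \in reps -> r <> [::]) /\
    forall w : word k, w <> [::] -> exists2 r, r \in reps & Gk_connected w r.

(* Square reductions and their inverses generate the congruence of the free
   band (the free idempotent monoid), so it suffices to show that every word is
   connected to a word of length bounded in terms of its content, the set of
   its letters (Green and Rees).  The two band laws used are x x ~ x and
   x y x ~ x when the content of y lies in that of x.  Writing w = X q = r Z
   with X the shortest prefix and Z the shortest suffix of full content, they
   give w ~ w w = X (q r) Z ~ X (q r) Z X Z ~ X Z; and X = p a, Z = b s where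
   the contents of p and s are strictly smaller than that of w, so induction
   on the size of the content bounds the length by 2^(n+1) - 2 for n letters. *)
From mathcomp Require Import all_boot.
From mathcomp Require Import zify.
Set Implicit Arguments. Unset Strict Implicit. Unset Printing Implicit Defensive.

Section ContentSplit.
Variable T : eqType.
Implicit Types p w : seq T.

Lemma split_shortest_full_prefix w : w <> [::] ->
  exists p a q, [/\ w = p ++ a :: q, a \notin p & {subset w <= rcons p a}].
Proof.
case/lastP: w => // w x _; elim/last_ind: w x => [|w y IH] x.
  by exists [::], x, [::]; split=> // z.
have [x_in|x_notin] := boolP (x \in rcons w y); last first.
  by exists (rcons w y), x, [::]; split; rewrite ?cats1.
have [p [a [q [e a_notin sub]]]] := IH y; rewrite e.
exists p, a, (rcons q x); split=> //; first by rewrite rcons_cat.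
move=> z; rewrite mem_rcons inE => /predU1P [->|z_in]; apply: sub.
- exact: x_in.
- by rewrite e.
Qed.

Lemma split_shortest_full_suffix w : w <> [::] ->
  exists r b s, [/\ w = r ++ b :: s, b \notin s & {subset w <= b :: s}].
Proof.
move=> w_nil.
have [|p [a [q [e a_notin sub]]]] := split_shortest_full_prefix (w := rev w).
  by move=> /(congr1 rev); rewrite revK.
exists (rev q), a, (rev p); split; last 2 first.
- by rewrite mem_rev.
- by move=> z; rewrite -mem_rev => /sub; rewrite mem_rcons !inE mem_rev.
by rewrite -[w]revK e rev_cat rev_cons cat_rcons.
Qed.

Lemma size_undup_lt p w a : a \notin p -> {subset p <= w} -> a \in w ->
  size (undup p) < size (undup w).
Proof.
move=> a_notin sub a_in; apply: (uniq_leq_size (s1 := a :: undup p)).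
  by rewrite /= mem_undup a_notin undup_uniq.
by move=> z; rewrite inE !mem_undup => /predU1P [->|/sub].
Qed.

End ContentSplit.

Section FreeBand.
Variable k : nat.
Local Notation con := (@Gk_connected k).
Implicit Types l r s t u v w x y : word k.

Lemma Gk_adj_sym u v : Gk_adj u v -> Gk_adj v u.
Proof. by case=> [u_nil [v_nil red]]; do 2!split=> //; tauto. Qed.

Lemma Gk_connected_trans u v w : con u v -> con v w -> con u w.
Proof. by elim=> // a b c adj _ IH /IH; apply: Gk_step. Qed.

Lemma Gk_connected_sym u v : con u v -> con v u.
Proof.
elim=> [w|a b c adj _ IH]; first exact: Gk_refl.
exact: Gk_connected_trans IH (Gk_step (Gk_adj_sym adj) (Gk_refl _)).
Qed.

Lemma Gk_connected_nonempty u v : con u v -> u <> [::] -> v <> [::].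
Proof. by elim=> // a b c [_ [b_nil _]] _ IH _; apply: IH. Qed.

Lemma square_reduction_cat l r W U : square_reduction W U ->
  square_reduction (l ++ W ++ r) (l ++ U ++ r).
Proof.
case=> [u [x [v [x_nil [-> ->]]]]]; exists (l ++ u), x, (v ++ r).
by rewrite !catA.
Qed.

Lemma Gk_connected_cat l r u v : con u v -> con (l ++ u ++ r) (l ++ v ++ r).
Proof.
have cat_nil m : m <> [::] -> l ++ m ++ r <> [::] by case: l; case: m.
elim=> [w|a b c [a_nil [b_nil red]] _ IH]; first exact: Gk_refl.
apply: Gk_step IH; split; [exact: cat_nil | split; first exact: cat_nil].
by case: red => ?; [left|right]; apply: square_reduction_cat.
Qed.

Lemma Gk_connected_catl l u v : con u v -> con (l ++ u) (l ++ v).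
Proof. by move/(Gk_connected_cat l [::]); rewrite !cats0. Qed.

Lemma Gk_connected_catr r u v : con u v -> con (u ++ r) (v ++ r).
Proof. exact: (Gk_connected_cat [::] r). Qed.

Lemma Gk_connected_square x : con (x ++ x) x.
Proof.
case: x => [|c x]; first exact: Gk_refl.
apply: Gk_step (Gk_refl _); do 2!split=> //; left.
by exists [::], (c :: x), [::]; rewrite !cats0.
Qed.

Lemma Gk_connected_sandwich s w t :
  con (s ++ w ++ t) ((s ++ w ++ t) ++ (s ++ t) ++ (s ++ w ++ t)).
Proof.
apply: Gk_connected_trans (Gk_connected_sym (Gk_connected_square _)) _.
have -> : (s ++ w ++ t) ++ s ++ w ++ t = (s ++ w) ++ (t ++ s) ++ (w ++ t)
  by rewrite !catA.
have -> : (s ++ w ++ t) ++ (s ++ t) ++ s ++ w ++ t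
        = (s ++ w) ++ ((t ++ s) ++ (t ++ s)) ++ (w ++ t) by rewrite !catA.
exact/Gk_connected_cat/Gk_connected_sym/Gk_connected_square.
Qed.

(* Each letter of y is brought next to the previously built factor by
   duplicating x and inserting a copy of the letter with the sandwich law. *)
Lemma Gk_connected_factor y x : {subset y <= x} ->
  exists u v, con x (u ++ y ++ v).
Proof.
elim: y => [|a y IH] sub.
  by exists x, [::]; rewrite /= cats0; apply: Gk_refl.
have [u' [v' ex]] : exists u' v', x = u' ++ a :: v'.
  by case/splitPr: (sub a (mem_head a y)) => u' v'; exists u', v'.
have [u [v xy]] : exists u v, con x (u ++ y ++ v).
  by apply: IH => z z_in; apply: sub; rewrite inE z_in orbT.
exists (u' ++ [:: a] ++ (v' ++ u) ++ y), (([:: a] ++ (v' ++ u) ++ y) ++ v).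
apply: Gk_connected_trans (Gk_connected_sym (Gk_connected_square x)) _.
apply: Gk_connected_trans (Gk_connected_catl x xy) _.
have := Gk_connected_cat u' v (Gk_connected_sandwich [:: a] (v' ++ u) y).
by rewrite {1}ex -!catA.
Qed.

Lemma Gk_connected_absorb x y : {subset y <= x} -> con (x ++ y ++ x) x.
Proof.
move=> sub; have [u [v xy]] : exists u v, con x (u ++ (x ++ y) ++ v).
  by apply: Gk_connected_factor => z; rewrite mem_cat => /orP [] // /sub.
have ux : con (u ++ x) x.
  apply: Gk_connected_trans (Gk_connected_catl u xy) _.
  rewrite catA; apply: Gk_connected_trans (Gk_connected_sym xy).
  exact/Gk_connected_catr/Gk_connected_square.
have xyv : con x (x ++ y ++ v).
  apply: Gk_connected_trans xy _; rewrite -!catA catA; exact: Gk_connected_catr.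
rewrite catA; apply: Gk_connected_trans (Gk_connected_catl (x ++ y) xyv) _.
have -> : (x ++ y) ++ x ++ y ++ v = ((x ++ y) ++ (x ++ y)) ++ v
  by rewrite -!catA.
apply: Gk_connected_trans (Gk_connected_catr _ (Gk_connected_square _)) _.
by rewrite -catA; apply: Gk_connected_sym.
Qed.

Lemma Gk_connected_prefix_suffix w X q r Z : w = X ++ q -> w = r ++ Z ->
  {subset w <= X} -> {subset w <= Z} -> con w (X ++ Z).
Proof.
move=> wX wZ subX subZ.
apply: Gk_connected_trans (Gk_connected_sym (Gk_connected_square w)) _.
have -> : w ++ w = (X ++ q ++ r) ++ Z by rewrite {1}wX {1}wZ -!catA.
have ZXZ : con Z (Z ++ X ++ Z).
  apply/Gk_connected_sym/Gk_connected_absorb => z zX.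
  by apply: subZ; rewrite wX mem_cat zX.
apply: Gk_connected_trans (Gk_connected_catl (X ++ q ++ r) ZXZ) _.
have -> : (X ++ q ++ r) ++ Z ++ X ++ Z = (X ++ ((q ++ r) ++ Z) ++ X) ++ Z
  by rewrite -!catA.
apply/Gk_connected_catr/Gk_connected_absorb => z; rewrite !mem_cat => z_in.
apply: subX; case/orP: z_in => [/orP [] | ] z_in.
- by rewrite wX mem_cat z_in orbT.
- by rewrite wZ mem_cat z_in.
- by rewrite wZ mem_cat z_in orbT.
Qed.

Fixpoint band_length_bound n :=
  if n is n'.+1 then (band_length_bound n').*2.+2 else 0.

Lemma Gk_connected_short n w : size (undup w) <= n ->
  exists2 w', con w w' & size w' <= band_length_bound n.
Proof.
elim: n w => [|n IH] w.
  rewrite leqn0 size_eq0 => /eqP/undup_nil ->.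
  by exists [::]; first exact: Gk_refl.
case: w => [|c w0] w_size; first by exists [::]; first exact: Gk_refl.
set w := c :: w0 in w_size *; have w_nil : w <> [::] by [].
have [p [a [q [wp a_notin subp]]]] := split_shortest_full_prefix w_nil.
have [r [b [s [ws b_notin subs]]]] := split_shortest_full_suffix w_nil.
have w_ps : con w (p ++ [:: a; b] ++ s).
  have -> : p ++ [:: a; b] ++ s = rcons p a ++ b :: s by rewrite cat_rcons.
  by apply: (Gk_connected_prefix_suffix (q := q) (r := r)); rewrite ?cat_rcons.
have p_size : size (undup p) <= n.
  rewrite -ltnS; apply: (leq_trans _ w_size); apply: (size_undup_lt a_notin).
    by move=> z zp; rewrite wp mem_cat zp.
  by rewrite wp mem_cat inE eqxx orbT.
have s_size : size (undup s) <= n.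
  rewrite -ltnS; apply: (leq_trans _ w_size); apply: (size_undup_lt b_notin).
    by move=> z zs; rewrite ws mem_cat inE zs !orbT.
  by rewrite ws mem_cat inE eqxx orbT.
have [p' pp' p'_size] := IH p p_size.
have [s' ss' s'_size] := IH s s_size.
exists (p' ++ [:: a; b] ++ s'); last by rewrite !size_cat /=; lia.
apply: Gk_connected_trans w_ps _.
apply: Gk_connected_trans (Gk_connected_catr _ pp') _.
exact: Gk_connected_catl (Gk_connected_catl _ ss').
Qed.

End FreeBand.

Fixpoint words_upto k n : seq (word k) :=
  if n is n'.+1 then [::] :: [seq x :: w | x <- enum 'I_k, w <- words_upto k n']
  else [:: [::]].

Lemma mem_words_upto k n (w : word k) : size w <= n -> w \in words_upto k n.
Proof.
elim: n w => [|n IH] [|c w] //= w_size; rewrite inE; apply/orP; right.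
by apply: (allpairs_f (fun x w => x :: w)); rewrite ?mem_enum ?IH.
Qed.

Lemma Gk_finite_components k : Gk_finitely_many_components k.
Proof.
exists [seq w <- words_upto k (band_length_bound k) | w != [::]]; split.
  by move=> r; rewrite mem_filter => /andP [/eqP].
move=> w w_nil.
have w_size : size (undup w) <= k.
  rewrite -[X in _ <= X]size_enum_ord.
  by apply: uniq_leq_size (undup_uniq w) _ => z _; rewrite mem_enum.
have [w' ww' w'_size] := Gk_connected_short w_size.
exists w' => //; rewrite mem_filter mem_words_upto // andbT.
exact/eqP/(Gk_connected_nonempty ww').
Qed.

Theorem theorem2p10 : Gk_finitely_many_components 3.
Proof. exact: Gk_finite_components. Qed.
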